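(* Let $G$ be a connected graph obtained by point-attaching from pairwise disjoint connected graphs $G_1,\dots,G_k$. Then $\chi_{dom}(G)\le \chi_{dom}(G_1)+\chi_{dom}(G_2)+\cdots+\chi_{dom}(G_k)$.
   Context: All graphs are finite and simple. A dominated coloring of a graph is a proper coloring in which every color class is dominated by at least one vertex, i.e. for each color class $C$ there is a vertex adjacent to every vertex of $C$; $\chi_{dom}$ denotes the minimum number of colors in a dominated coloring. Point-attaching: given pairwise disjoint connected graphs $G_1,\dots,G_k$, select a vertex of $G_1$ and a vertex of $G_2$ and identify them; then continue inductively, each time identifying a vertex of the graph built so far with a vertex of the next $G_i$. The resulting connected graph is said to be obtained by point-attaching from $G_1,\dots,G_k$. *)

From mathcomp Require Import all_boot.
Set Implicit Arguments. Unset Strict Implicit. Unset Printing Implicit Defensive.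

Record sgraph : Type := SGraph {
  svert : finType;
  sadj : rel svert;
  sadj_sym : symmetric sadj;
  sadj_irr : irreflexive sadj }.

Definition connected (G : sgraph) : bool :=
  (0 < #|svert G|) && [forall u, forall v, connect (@sadj G) u v].

Definition dom_coloring (G : sgraph) (k : nat) (f : {ffun svert G -> 'I_k}) : bool :=
  [forall u, forall v, sadj u v ==> (f u != f v)] &&
  [forall i : 'I_k, exists w, forall u, (f u == i) ==> sadj w u].

Definition has_dom_coloring (G : sgraph) (k : nat) : bool :=
  [exists f : {ffun svert G -> 'I_k}, dom_coloring f].

(* chi_dom G : the least k such that G has a dominated coloring with k colors.
   (If G has a dominated coloring at all, it has one with at most #|V| colors,
   so searching k in 0..#|V| suffices; the value is only meaningful when G
   admits a dominated coloring.) *)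
Definition chi_dom (G : sgraph) : nat :=
  find (has_dom_coloring G) (iota 0 #|svert G|.+1).

(* One point-attaching step: identify vertex x of H with vertex y of G.
   Vertices: those of H, plus those of G other than y. *)
Section Attach.
Variables (H G : sgraph) (x : svert H) (y : svert G).

Definition att_vert : finType := (svert H + {v : svert G | v != y})%type.

Definition att_adj : rel att_vert := fun a b =>
  match a, b with
  | inl a, inl b => sadj a b
  | inr a, inr b => sadj (val a) (val b)
  | inl a, inr b => (a == x) && sadj y (val b)
  | inr a, inl b => (b == x) && sadj (val a) y
  end.

Lemma att_adj_sym : symmetric att_adj.
Proof.
move=> [a|a] [b|b] /=.
- exact: sadj_sym.
- by rewrite [sadj y _]sadj_sym.
- by rewrite [sadj _ y]sadj_sym.
- exact: sadj_sym.
Qed.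

Lemma att_adj_irr : irreflexive att_adj.
Proof. by move=> [a|a] /=; apply: sadj_irr. Qed.

Definition attach : sgraph := SGraph att_adj_sym att_adj_irr.
End Attach.

(* point_attached G Gs : G is obtained by point-attaching from the graphs
   Gs = [:: G_1; ...; G_k] (in this order), the G_i being taken pairwise
   disjoint (disjoint union is built into [attach]). *)
Inductive point_attached : sgraph -> seq sgraph -> Prop :=
  | pa_base (G1 : sgraph) : point_attached G1 [:: G1]
  | pa_step (H : sgraph) (Gs : seq sgraph) (G : sgraph)
      (x : svert H) (y : svert G) :
      point_attached H Gs -> point_attached (attach x y) (rcons Gs G).

(* Colour the pieces with optimal dominated colourings using pairwise disjoint
   palettes and glue them.  Properness is clear, since adjacent vertices lie in
   a common piece.  At an identified vertex the colour of the graph built so far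
   is kept; a colour class of the new piece that was dominated by the identified
   vertex is still dominated by it in the glued graph, since that vertex keeps
   all its neighbours of the new piece. *)
From mathcomp Require Import all_boot.

Set Implicit Arguments. Unset Strict Implicit. Unset Printing Implicit Defensive.

Definition proper_coloring (G : sgraph) (k : nat) (f : {ffun svert G -> 'I_k}) :=
  [forall u, forall v, sadj u v ==> (f u != f v)].

Definition classes_dominated (G : sgraph) (k : nat) (f : {ffun svert G -> 'I_k}) :=
  [forall i : 'I_k, exists w, forall u, (f u == i) ==> sadj w u].

Lemma dom_coloringE (G : sgraph) (k : nat) (f : {ffun svert G -> 'I_k}) :
  dom_coloring f = proper_coloring f && classes_dominated f.
Proof. by []. Qed.

Lemma chi_dom_min (G : sgraph) (k : nat) :
  has_dom_coloring G k -> chi_dom G <= k.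
Proof.
move=> colk; rewrite /chi_dom; case: (leqP k #|svert G|) => [le_k_card | lt_card_k].
- rewrite leqNgt; apply/negP => /(before_find 0).
  by rewrite nth_iota ?ltnS // add0n colk.
- by apply: leq_trans (find_size _ _) _; rewrite size_iota.
Qed.

Lemma dom_coloring_no_isolated (G : sgraph) (k : nat) (f : {ffun svert G -> 'I_k}) :
  dom_coloring f -> forall v : svert G, exists w, sadj w v.
Proof.
rewrite dom_coloringE => /andP [_ /forallP dom_f] v.
have /existsP [w /forallP dom_w] := dom_f (f v).
by exists w; have := dom_w v; rewrite eqxx.
Qed.

Lemma has_dom_coloring_card (G : sgraph) :
  (forall v : svert G, exists w, sadj w v) -> has_dom_coloring G #|svert G|.
Proof.
move=> no_isolated; apply/existsP; exists [ffun v => enum_rank v].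
rewrite dom_coloringE; apply/andP; split.
- apply/forallP => u; apply/forallP => v; apply/implyP => adj_uv.
  rewrite !ffunE; apply: contraTneq adj_uv => /enum_rank_inj ->.
  by rewrite sadj_irr.
- apply/forallP => i; have [w adj_w] := no_isolated (enum_val i).
  apply/existsP; exists w; apply/forallP => u; apply/implyP.
  by rewrite ffunE => /eqP eq_ui; rewrite -(enum_rankK u) eq_ui.
Qed.

Lemma has_dom_coloring_chi_dom (G : sgraph) (k : nat) :
  has_dom_coloring G k -> has_dom_coloring G (chi_dom G).
Proof.
move=> /existsP [f /dom_coloring_no_isolated /has_dom_coloring_card col_card].
have has_col : has (has_dom_coloring G) (iota 0 #|svert G|.+1).
  by apply/hasP; exists #|svert G|; rewrite // mem_iota add0n ltnS leqnn.
have := nth_find 0 has_col; rewrite nth_iota //.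
by rewrite -[X in _ < X](size_iota 0) -has_find.
Qed.

Section AttachColoring.
Variables (H G : sgraph) (x : svert H) (y : svert G) (a b : nat).
Variables (fH : {ffun svert H -> 'I_a}) (fG : {ffun svert G -> 'I_b}).

Definition attach_coloring : {ffun svert (attach x y) -> 'I_(a + b)} :=
  [ffun v => match v with
             | inl h => lshift b (fH h)
             | inr g => rshift a (fG (val g))
             end].

Lemma attach_coloring_proper :
  proper_coloring fH -> proper_coloring fG -> proper_coloring attach_coloring.
Proof.
move=> /forallP properH /forallP properG.
apply/forallP => -[u|u]; apply/forallP => -[v|v]; apply/implyP => /= adj_uv;
  rewrite !ffunE ?eq_lrshift ?eq_rlshift //.
- by rewrite eq_lshift; move: (properH u) => /forallP/(_ v)/implyP; apply.
- by rewrite eq_rshift; move: (properG (val u)) => /forallP/(_ (val v))/implyP; apply.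
Qed.

Lemma attach_coloring_dominated :
  classes_dominated fH -> classes_dominated fG -> classes_dominated attach_coloring.
Proof.
move=> /forallP domH /forallP domG.
apply/forallP => i; case: (split_ordP i) => j -> {i}.
- have /existsP [w /forallP dom_w] := domH j.
  apply/existsP; exists (inl w); apply/forallP => -[u|u]; rewrite ffunE.
  + by rewrite eq_lshift; apply: dom_w.
  + by rewrite eq_rlshift.
- have /existsP [w /forallP dom_w] := domG j.
  have [w_eq_y|w_neq_y] := eqVneq w y.
  + apply/existsP; exists (inl x); apply/forallP => -[u|u]; rewrite ffunE.
      by rewrite eq_lrshift.
    by rewrite eq_rshift /= eqxx; move: (dom_w (val u)); rewrite w_eq_y.
  + apply/existsP; exists (inr (exist _ w w_neq_y)); apply/forallP => -[u|u].
      by rewrite ffunE eq_lrshift.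
    by rewrite ffunE eq_rshift; apply: dom_w.
Qed.

End AttachColoring.

Lemma has_dom_coloring_attach (H G : sgraph) (x : svert H) (y : svert G) (a b : nat) :
  has_dom_coloring H a -> has_dom_coloring G b ->
  has_dom_coloring (attach x y) (a + b).
Proof.
rewrite /has_dom_coloring.
move=> /existsP [fH]; rewrite dom_coloringE => /andP [properH domH].
move=> /existsP [fG]; rewrite dom_coloringE => /andP [properG domG].
apply/existsP; exists (attach_coloring x y fH fG); rewrite dom_coloringE.
by rewrite attach_coloring_proper ?attach_coloring_dominated.
Qed.

Lemma has_dom_coloring_point_attached (G : sgraph) (Gs : seq sgraph) :
  point_attached G Gs ->
  all (fun Gi => has_dom_coloring Gi (chi_dom Gi)) Gs ->
  has_dom_coloring G (\sum_(Gi <- Gs) chi_dom Gi).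
Proof.
elim=> [G1 | H Hs G' x y _ IH]; first by rewrite big_seq1 /= andbT.
by rewrite big_rcons all_rcons => /andP [col_G' /IH col_H]; apply: has_dom_coloring_attach.
Qed.

(* Connectedness only serves, in the paper, to guarantee that every piece has
   a dominated colouring; that is assumed directly here. *)
Theorem mainTheorem2 (G : sgraph) (Gs : seq sgraph) :
  point_attached G Gs ->
  all connected Gs ->
  (forall i, i < size Gs -> exists k, has_dom_coloring (nth G Gs i) k) ->
  chi_dom G <= \sum_(Gi <- Gs) chi_dom Gi.
Proof.
move=> attached _ colorable; apply/chi_dom_min/has_dom_coloring_point_attached => //.
apply/(all_nthP G) => i i_lt.
by have [k col_k] := colorable i i_lt; apply: has_dom_coloring_chi_dom col_k.
Qed.
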